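(* Fix a question $q$ and a reference answer $a^*$. Let $\mathcal{S}$ (solutions) and $\mathcal{A}$ (answers) be countable sets, let $\pi_\theta(\cdot\mid q)$ be a probability distribution on $\mathcal{S}$, and for each $s\in\mathcal{S}$ let $\pi_\theta(\cdot\mid s,q)$ be a probability distribution on $\mathcal{A}$, so that the joint law of $(S,A)$ is $\pi_\theta(a,s\mid q)=\pi_\theta(s\mid q)\,\pi_\theta(a\mid s,q)$. Assume $\Pr(A=a^* )=\sum_{s}\pi_\theta(s\mid q)\pi_\theta(a^*\mid s,q)>0$. Define the conditional expectation reward $$\rho(a^*,a^* )=\mathbb{E}_{s'\sim\pi_\theta(\cdot\mid q)}\big[\pi_\theta(a^*\mid s',q)\,\big|\,A=a^*\big]=\sum_{s'\in\mathcal{S}}\pi_\theta(s'\mid q,a^* )\,\pi_\theta(a^*\mid s',q),$$ where $\pi_\theta(s'\mid q,a^* )=\dfrac{\pi_\theta(s'\mid q)\pi_\theta(a^*\mid s',q)}{\sum_{s''}\pi_\theta(s''\mid q)\pi_\theta(a^*\mid s'',q)}$. Then $$\rho(a^*,a^* )\;\ge\;\mathbb{E}_{s\sim\pi_\theta(\cdot\mid q)}\big[\pi_\theta(a^*\mid s,q)\big],$$ with equality if and only if $\pi_\theta(a^*\mid s,q)$ is constant over all $s$ with $\pi_\theta(s\mid q)>0$.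
   Context: A policy $\pi_\theta$ generates, given a question $q$, a solution $s$ and then an answer $a$; the conditional expectation reward (CER) of a generated answer $a$ with respect to a reference answer $a^*$ is $\rho(a,a^* )=\sum_{s'}\pi_\theta(s'\mid q,a)\,\pi_\theta(a^*\mid s',q)$, defined for answers $a$ with positive marginal probability under the policy. *)

From HB Require Import structures.
From mathcomp Require Import all_boot all_order all_algebra.
From mathcomp Require Import all_classical all_reals.
From mathcomp Require Import ereal esum.
Set Implicit Arguments. Unset Strict Implicit. Unset Printing Implicit Defensive.
Import Order.TTheory GRing.Theory Num.Theory.
Local Open Scope classical_set_scope.
Local Open Scope ring_scope.
Local Open Scope ereal_scope.

Definition is_pmf (R : realType) (T : countType) (p : T -> R) : Prop :=
  (forall t, (0 <= p t)%R) /\ \esum_(t in [set: T]) (p t)%:E = 1.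

Definition ans_prob (R : realType) (S A : countType)
  (p : S -> R) (k : S -> A -> R) (a : A) : \bar R :=
  \esum_(s in [set: S]) (p s * k s a)%:E.

Definition posterior (R : realType) (S A : countType)
  (p : S -> R) (k : S -> A -> R) (a : A) (s : S) : R :=
  (p s * k s a / fine (ans_prob p k a))%R.

(* Conditional expectation reward rho(a, astar) for the generated answer a
   and the reference answer astar:
   rho = sum_s' pi(s'|q,a) pi(astar|s',q). *)
Definition cer (R : realType) (S A : countType)
  (p : S -> R) (k : S -> A -> R) (a astar : A) : \bar R :=
  \esum_(s in [set: S]) (posterior p k a s * k s astar)%:E.

Definition exp_reward (R : realType) (S A : countType)
  (p : S -> R) (k : S -> A -> R) (astar : A) : \bar R :=
  \esum_(s in [set: S]) (p s * k s astar)%:E.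

(* Write p(s) := pi(s|q) and X(s) := pi(a|s,q) for the reference answer a, so that
   m := Pr(A = a) = E[X].  The posterior weight of s given a is p(s) X(s) / m, hence
   rho(a,a) = E[X^2] / m = m + Var X / m >= m, with equality iff Var X = 0, i.e. iff
   X is constant on the support of p. *)
From HB Require Import structures.
From mathcomp Require Import all_boot all_order all_algebra.
From mathcomp Require Import all_classical all_reals.
From mathcomp Require Import ereal esum.
From mathcomp Require Import ring lra.
Import Order.TTheory GRing.Theory Num.Theory.
Local Open Scope classical_set_scope.
Local Open Scope ring_scope.
Local Open Scope ereal_scope.

Section esum_nonneg.
Context {R : realType} {T : choiceType}.
Implicit Types (I : set T) (a : T -> \bar R).

Lemma esumZl I a r : (0 <= r)%R -> (forall i, 0 <= a i) ->
  \esum_(i in I) (r%:E * a i) = r%:E * \esum_(i in I) a i.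
Proof.
move=> r_ge0 a_ge0; rewrite /esum -ereal_supZl//; last first.
  by apply/set0P; exists (\sum_(i \in set0) a i); exists set0 => //; exact: fsets_set0.
congr ereal_sup; apply/seteqP; split => x /=.
- move=> [F IF <-]; exists (\sum_(i \in F) a i); first by exists F.
  by rewrite ge0_mule_fsumr.
- by move=> [y [F IF <-] <-]; exists F; rewrite ?ge0_mule_fsumr.
Qed.

Lemma le_term_esum I a t : I t -> a t <= \esum_(i in I) a i.
Proof.
move=> It; apply: esum_ge; exists [set t]; last by rewrite fsbig_set1.
by split; [exact: finite_set1 | move=> _ ->].
Qed.

Lemma esum_eq0P I a : (forall i, I i -> 0 <= a i) ->
  \esum_(i in I) a i = 0 <-> forall i, I i -> a i = 0.
Proof.
move=> a_ge0; split => [a0 i Ii | /esum1//].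
by apply/eqP; rewrite eq_le a_ge0// andbT -a0 le_term_esum.
Qed.

End esum_nonneg.

Lemma pmf_le1 {R : realType} {T : countType} {p : T -> R} :
  is_pmf p -> forall t, (p t <= 1)%R.
Proof.
by case=> _ p1 t; rewrite -lee_fin -p1; exact: (le_term_esum _ (fun t => (p t)%:E)).
Qed.

Lemma pmf_exists_gt0 {R : realType} {T : countType} {p : T -> R} :
  is_pmf p -> exists t, (0 < p t)%R.
Proof.
case=> p_ge0 p1; apply: contrapT => /forallNP p_le0; move: p1.
rewrite esum1 => [/eqP|t _]; first by rewrite eq_sym onee_eq0.
by apply/eqP; rewrite eqe eq_le p_ge0 andbT leNgt; apply/negP/p_le0.
Qed.

Definition mean {R : realType} {T : countType} (p X : T -> R) : \bar R :=
  \esum_(t in [set: T]) (p t * X t)%:E.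

Definition moment2 {R : realType} {T : countType} (p X : T -> R) : \bar R :=
  \esum_(t in [set: T]) (p t * X t ^+ 2)%:E.

(* [fine] maps an infinite mean to 0; the means considered below are all finite. *)
Definition variance {R : realType} {T : countType} (p X : T -> R) : \bar R :=
  \esum_(t in [set: T]) (p t * (X t - fine (mean p X)) ^+ 2)%:E.

Section unit_interval_random_variable.
Context {R : realType} {T : countType} (p X : T -> R).
Hypotheses (pmf_p : is_pmf p) (X_ge0 : forall t, (0 <= X t)%R)
  (X_le1 : forall t, (X t <= 1)%R).

Let p_ge0 t : (0 <= p t)%R. Proof. by case: pmf_p. Qed.

Lemma mean_ge0 : 0 <= mean p X.
Proof. by apply: esum_ge0 => t _; rewrite lee_fin mulr_ge0. Qed.

Lemma mean_le1 : mean p X <= 1.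
Proof. by case: pmf_p => _ <-; apply: le_esum => t _; rewrite lee_fin ler_piMr. Qed.

Lemma mean_fin_num : mean p X \is a fin_num.
Proof. by rewrite ge0_fin_numE ?mean_ge0// (le_lt_trans mean_le1) ?ltry. Qed.

Local Notation m := (fine (mean p X)).

Lemma fine_mean_ge0 : (0 <= m)%R.
Proof. exact/fine_ge0/mean_ge0. Qed.

Lemma fine_mean_le1 : (m <= 1)%R.
Proof. by rewrite -lee_fin fineK ?mean_fin_num ?mean_le1. Qed.

Lemma variance_ge0 : 0 <= variance p X.
Proof. by apply: esum_ge0 => t _; rewrite lee_fin mulr_ge0 ?sqr_ge0. Qed.

Lemma variance_fin_num : variance p X \is a fin_num.
Proof.
rewrite ge0_fin_numE ?variance_ge0//; apply: (@le_lt_trans _ _ 1); last exact: ltry.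
case: pmf_p => _ <-; apply: le_esum => t _; rewrite lee_fin ler_piMr//.
rewrite -real_normK ?num_real// expr_le1// ler_norml.
have := fine_mean_ge0; have := fine_mean_le1; have := X_ge0 t; have := X_le1 t.
by move=> *; apply/andP; split; lra.
Qed.

Lemma moment2_variance : moment2 p X = variance p X + (m ^+ 2)%:E.
Proof.
have mE : mean p X = m%:E by rewrite fineK ?mean_fin_num.
(* [c] freezes [m], so that folding [mean p X] below does not rewrite inside it. *)
move: fine_mean_ge0 mE; rewrite /moment2 /variance; set c := m => c_ge0 mE.
have : \esum_(t in [set: T]) ((p t * X t ^+ 2)%:E + (c ^+ 2)%:E * (p t)%:E) =
    \esum_(t in [set: T]) ((p t * (X t - c) ^+ 2)%:E + (2 * c)%:E * (p t * X t)%:E).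
  by apply: eq_esum => t _; rewrite -!EFinM -!EFinD; congr EFin; ring.
rewrite !esumD; try by move=> t _; rewrite -?EFinM lee_fin; apply: mulr_ge0;
  rewrite ?sqr_ge0 ?mulr_ge0.
rewrite !esumZl ?sqr_ge0 ?mulr_ge0// => [|t]; last by rewrite lee_fin mulr_ge0.
rewrite -/(mean p X) mE; case: pmf_p => _ ->; rewrite mule1 -EFinM => expand.
rewrite -[LHS](addeK _ (fin_numE _ : (c ^+ 2)%:E \is a fin_num)) expand.
by rewrite -addeA -EFinN -EFinD; congr (_ + _%:E); ring.
Qed.

Lemma mean_const c : (forall t, (0 < p t)%R -> X t = c) -> mean p X = c%:E.
Proof.
move=> Xc; have pX t : (p t * X t = c * p t)%R.
  have [->|pt] := eqVneq (p t) 0%R; first by rewrite mul0r mulr0.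
  by rewrite mulrC Xc// lt0r pt p_ge0.
have [t0 pt0] := pmf_exists_gt0 pmf_p.
have c_ge0 : (0 <= c)%R by rewrite -(Xc t0 pt0).
rewrite /mean (eq_esum (b := fun t => c%:E * (p t)%:E)) => [|t _]; last by rewrite pX EFinM.
by rewrite esumZl//; case: pmf_p => _ ->; rewrite mule1.
Qed.

Lemma variance_eq0P :
  variance p X = 0 <-> exists c, forall t, (0 < p t)%R -> X t = c.
Proof.
rewrite esum_eq0P => [|t _]; last by rewrite lee_fin mulr_ge0 ?sqr_ge0.
split => [V0 | [c Xc]].
  exists m => t pt; have /eqP := V0 t I.
  by rewrite eqe mulf_eq0 gt_eqF//= sqrf_eq0 subr_eq0 => /eqP.
move=> t _; have [->|pt] := eqVneq (p t) 0%R; first by rewrite mul0r.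
by rewrite Xc ?lt0r ?pt ?p_ge0// (mean_const _ Xc) subrr expr0n mulr0.
Qed.

End unit_interval_random_variable.

Lemma cer_selfE {R : realType} {S A : countType} (p : S -> R) (k : S -> A -> R) a :
  (forall s, 0 <= p s)%R -> (forall s, 0 <= k s a)%R ->
  cer p k a a = (fine (ans_prob p k a))^-1%:E * moment2 p (k^~ a).
Proof.
move=> p_ge0 k_ge0; rewrite /moment2 -esumZl; last 2 first.
- by rewrite invr_ge0 fine_ge0// esum_ge0// => s _; rewrite lee_fin mulr_ge0.
- by move=> s; rewrite lee_fin mulr_ge0 ?sqr_ge0.
by apply: eq_esum => s _; rewrite -EFinM /posterior; congr EFin; ring.
Qed.

Theorem theorem1 (R : realType) (S A : countType)
  (p : S -> R) (k : S -> A -> R) (astar : A) :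
  is_pmf p ->
  (forall s, is_pmf (k s)) ->
  0 < ans_prob p k astar ->
  exp_reward p k astar <= cer p k astar astar /\
  (cer p k astar astar = exp_reward p k astar <->
   exists c : R, forall s, (0 < p s)%R -> k s astar = c).
Proof.
move=> pmf_p pmf_k P_gt0; pose X s := k s astar.
have X_ge0 s : (0 <= X s)%R by case: (pmf_k s) => k_ge0 _; exact: k_ge0.
have X_le1 s : (X s <= 1)%R by exact: pmf_le1 (pmf_k s) astar.
have p_ge0 s : (0 <= p s)%R by case: pmf_p.
set m := fine (mean p X); set v := fine (variance p X).
have mE : mean p X = m%:E by rewrite fineK ?mean_fin_num.
have vE : variance p X = v%:E by rewrite fineK ?variance_fin_num.
have m_gt0 : (0 < m)%R by rewrite -lte_fin -mE.
have v_ge0 : (0 <= v)%R by exact/fine_ge0/variance_ge0.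
have cerE : cer p k astar astar = (m + v / m)%:E.
  rewrite (cer_selfE p k astar p_ge0 X_ge0) -/X (_ : ans_prob p k astar = m%:E) //=.
  rewrite moment2_variance// -/m vE -EFinD -EFinM.
  by congr EFin; field; rewrite gt_eqF.
rewrite [exp_reward _ _ _]mE cerE lee_fin lerDl divr_ge0 ?(ltW m_gt0)//; split=> //.
apply: (iff_trans _ (variance_eq0P p X pmf_p X_ge0)); rewrite vE.
split=> [[] /eqP | [] ->]; last by rewrite mul0r addr0.
by rewrite -subr_eq0 (addrC m) addrK mulf_eq0 invr_eq0 (gt_eqF m_gt0) orbF => /eqP->.
Qed.
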